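(* Let $p, \sigma \in \mathbb{R}$ and let $u \geq 0$ be a non-trivial function in $C^2(0,+\infty)$ solving $-u''(r) = r^\sigma u(r)^p$ for all $r \in (0,+\infty)$ (no continuity at $0$ assumed). Then: (1) $u$ is non-decreasing and $u'$ is non-increasing on $(0,+\infty)$; (2) there exist constants $c>0$, $C>0$ and $r_1>0$ such that $c \leq u(r) \leq C r$ for all $r \geq r_1$.
   Context: For $p=0$ the term $u^p$ is understood as $1$; for $p<0$ it is required that $u>0$ on $(0,+\infty)$. *)

From Stdlib Require Import Reals Lra.
From Coquelicot Require Import Coquelicot.
Open Scope R_scope.

(* Real power x^y following the paper's conventions:
   y = 0 gives 1 (even for x = 0); for x > 0 it is exp (y ln x);
   for x = 0 and y <> 0 it is 0 (the value 0^y, y > 0; for y < 0 the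
   theorem assumes x > 0 anyway). *)
Definition rpow (x y : R) : R :=
  if Req_EM_T y 0 then 1
  else if Rlt_dec 0 x then Rpower x y else 0.

Definition C2_pos (u : R -> R) : Prop :=
  forall r, 0 < r ->
    ex_derive u r /\ ex_derive (Derive u) r /\
    continuous (Derive (Derive u)) r.

(* Since [-u'' = r^sigma u^p >= 0], [u] is concave on (0,+oo), so it lies
   below each of its tangent lines. A tangent with negative slope would
   drive [u] below zero, hence [u' >= 0]: [u] is non-decreasing and [u']
   non-increasing. A point [r0] with [u r0 > 0] then gives the lower bound
   [u r0], and the tangent at [r0] gives linear growth. *)
From Stdlib Require Import Reals Lra.
From Coquelicot Require Import Coquelicot.
Open Scope R_scope.

Lemma MVT_pos (f : R -> R) (a b : R) :
  (forall r, 0 < r -> ex_derive f r) -> 0 < a -> a <= b ->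
  exists c, a <= c <= b /\ f b - f a = Derive f c * (b - a).
Proof.
  intros f_derivable Ha Hab.
  destruct (MVT_gen f a b (Derive f)) as [c [Hc Hmvt]].
  - intros x Hx. apply Derive_correct, f_derivable.
    rewrite Rmin_left in Hx by lra. lra.
  - intros x Hx. apply continuity_pt_filterlim.
    apply (ex_derive_continuous (K := R_AbsRing) (V := R_NormedModule)), f_derivable.
    rewrite Rmin_left in Hx by lra. lra.
  - exists c. rewrite Rmin_left, Rmax_right in Hc by lra. split; assumption.
Qed.

Lemma rpow_ge0 x y : 0 <= rpow x y.
Proof.
  unfold rpow. destruct (Req_EM_T y 0); [lra|].
  destruct (Rlt_dec 0 x); [left; apply exp_pos | lra].
Qed.

Section ConcaveOnPositiveHalfLine.

Variable u : R -> R.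
Hypothesis u_derivable : forall r, 0 < r -> ex_derive u r.
Hypothesis Du_derivable : forall r, 0 < r -> ex_derive (Derive u) r.
Hypothesis D2u_le0 : forall r, 0 < r -> Derive (Derive u) r <= 0.

Lemma Derive_nonincreasing a b : 0 < a -> a <= b -> Derive u b <= Derive u a.
Proof.
  intros Ha Hab. destruct (MVT_pos (Derive u) a b Du_derivable Ha Hab) as [c [Hc Hmvt]].
  pose proof (D2u_le0 c ltac:(lra)). nra.
Qed.

Lemma le_tangent a b : 0 < a -> a <= b -> u b <= u a + Derive u a * (b - a).
Proof.
  intros Ha Hab. destruct (MVT_pos u a b u_derivable Ha Hab) as [c [Hc Hmvt]].
  pose proof (Derive_nonincreasing a c Ha ltac:(lra)). nra.
Qed.

Hypothesis u_ge0 : forall r, 0 < r -> 0 <= u r.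

Lemma Derive_ge0 a : 0 < a -> 0 <= Derive u a.
Proof.
  intros Ha. destruct (Rle_or_lt 0 (Derive u a)) as [|Dua_lt0]; [assumption|].
  exfalso.
  (* the tangent at [a] reaches [-1] at [b] *)
  set (b := a + (u a + 1) / (- Derive u a)).
  pose proof (u_ge0 a Ha).
  assert (0 <= (u a + 1) / (- Derive u a)) by (apply Rle_mult_inv_pos; lra).
  assert (Derive u a * (b - a) = - (u a + 1)) by (unfold b; field; lra).
  pose proof (le_tangent a b Ha ltac:(unfold b; lra)).
  pose proof (u_ge0 b ltac:(unfold b; lra)).
  lra.
Qed.

Lemma nondecreasing a b : 0 < a -> a <= b -> u a <= u b.
Proof.
  intros Ha Hab. destruct (MVT_pos u a b u_derivable Ha Hab) as [c [Hc Hmvt]].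
  pose proof (Derive_ge0 c ltac:(lra)). nra.
Qed.

Lemma le_linear a r : 0 < a -> a <= r -> 1 <= r -> u r <= (u a + Derive u a) * r.
Proof.
  intros Ha Har Hr.
  pose proof (le_tangent a r Ha Har). pose proof (u_ge0 a Ha). pose proof (Derive_ge0 a Ha).
  nra.
Qed.

End ConcaveOnPositiveHalfLine.

Theorem lemma2p4 (p sigma : R) (u : R -> R) :
  C2_pos u ->
  (forall r, 0 < r -> 0 <= u r) ->
  (exists r, 0 < r /\ u r <> 0) ->
  (p < 0 -> forall r, 0 < r -> 0 < u r) ->
  (forall r, 0 < r ->
     - Derive (Derive u) r = Rpower r sigma * rpow (u r) p) ->
  (forall r s, 0 < r -> r <= s ->
     u r <= u s /\ Derive u s <= Derive u r) /\
  (exists c C r1, 0 < c /\ 0 < C /\ 0 < r1 /\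
     forall r, r1 <= r -> c <= u r /\ u r <= C * r).
Proof.
  intros HC u_ge0 [r0 [Hr0 ur0_neq0]] _ Hequation.
  assert (u_derivable : forall r, 0 < r -> ex_derive u r) by (intros r Hr; apply HC, Hr).
  assert (Du_derivable : forall r, 0 < r -> ex_derive (Derive u) r)
    by (intros r Hr; apply HC, Hr).
  assert (D2u_le0 : forall r, 0 < r -> Derive (Derive u) r <= 0).
  { intros r Hr. rewrite <- (Ropp_involutive (Derive _ r)), Hequation by exact Hr.
    pose proof (exp_pos (sigma * ln r)). pose proof (rpow_ge0 (u r) p).
    unfold Rpower. nra. }
  pose proof (nondecreasing u u_derivable Du_derivable D2u_le0 u_ge0) as u_nondecr.
  pose proof (Derive_nonincreasing u Du_derivable D2u_le0) as Du_nonincr.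
  split; [intros r s Hr Hrs; split; auto|].
  pose proof (u_ge0 r0 Hr0).
  pose proof (Derive_ge0 u u_derivable Du_derivable D2u_le0 u_ge0 r0 Hr0).
  pose proof (Rmax_l r0 1). pose proof (Rmax_r r0 1).
  exists (u r0), (u r0 + Derive u r0 + 1), (Rmax r0 1).
  repeat split; try lra.
  - apply u_nondecr; lra.
  - assert (u r <= (u r0 + Derive u r0) * r) by (apply le_linear; auto; lra). nra.
Qed.
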